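(* For all integers $n\ge3$ and $0\le m<n$, one has $L_e\le e_{n,m}\le U_e$, where \[ L_e=\frac{n-m+2}{n+m}e_{n-1,m-1}+\frac{n-m-2}{n-m}e_{n-1,m+1}+\frac{n-m-4}{n-m-2}\Bigl(\frac{2}{n-m}e_{n-2,m+2}+\frac{2}{n+m}e_{n-3,m+1}\Bigr), \] \[ U_e=\frac{n-m+2}{n+m}e_{n-1,m-1}+\frac{n-m-2}{n-m}e_{n-1,m+1}+\frac{2}{n-m}e_{n-2,m+2}+\frac{2}{n+m}e_{n-3,m+1}+\frac{4}{(n+m)(n+m-2)}e_{n-3,m-1}. \] Furthermore $U_e\le U_d\le d_{n,m}$, where $U_d$ is the expression $U_e$ with every $e$ replaced by $d$.
   Context: Define $c_{n,m}$ for integers $n,m\ge0$ by $c_{n,0}=1$ ($n\ge0$), $c_{n,m}=0$ ($n<m$), and $c_{n,m}=c_{n,m-1}+(m+1)c_{n-1,m}-(m-1)c_{n-2,m-1}$ for $n\ge m\ge1$ (the last term has coefficient $0$ when $m=1$); $c_{n,n}$ is the number of compacted binary trees of size $n$. Define $e_{n,m}=c_{(n+m)/2,(n-m)/2}/((n+m)/2)!$ for integers $n\ge m\ge0$ with $n-m$ even, and $e_{n,m}=0$ if $n-m$ is odd, if $m>n$, or if $m<0$. Define $d_{n,m}$ for $n\ge0$, $m\ge-1$ by $d_{0,0}=1$, $d_{0,m}=0$ ($m>0$), $d_{n,-1}=0$ ($n\ge0$), and $d_{n,m}=\frac{n-m+2}{n+m}d_{n-1,m-1}+d_{n-1,m+1}$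 for $n>0$, $m\ge0$ (equivalently, $d_{n,m}$ is the total weight of lattice paths from $(0,0)$ to $(n,m)$ with steps $(1,1),(1,-1)$ never below $y=0$, where an up step from $(a,b)$ has weight $(a-b+2)/(a+b+2)$). *)

From mathcomp Require Import all_boot all_order all_algebra.
Set Implicit Arguments. Unset Strict Implicit. Unset Printing Implicit Defensive.
Import Order.TTheory GRing.Theory Num.Theory.
Local Open Scope ring_scope.

(* c_{n,m}: c_{n,0}=1, c_{n,m}=0 (n<m),
   c_{n,m} = c_{n,m-1} + (m+1) c_{n-1,m} - (m-1) c_{n-2,m-1}  (n>=m>=1),
   the last term being 0 when m = 1 (in particular when n = 1). *)
Fixpoint cnum (n : nat) : nat -> int :=
  match n with
  | 0%N => fun m => if m is 0%N then 1 else 0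
  | n1.+1 =>
      fix cm (m : nat) : int :=
        match m with
        | 0%N => 1
        | m1.+1 =>
            if (n < m)%N then 0
            else cm m1 + (m1.+2)%:Z * cnum n1 m
                 - (match n1 with 0%N => 0 | n2.+1 => m1%:Z * cnum n2 m1 end)
        end
  end.

Definition enum_ (n m : int) : rat :=
  match n, m with
  | Posz n', Posz m' =>
      if (m' <= n')%N && ~~ odd (n' - m') then
        (cnum ((n' + m')./2) ((n' - m')./2))%:~R / ((n' + m')./2)`!%:R
      else 0
  | _, _ => 0
  end.

Fixpoint dnat (n m : nat) : rat :=
  match n with
  | 0%N => if m is 0%N then 1 else 0
  | n1.+1 =>
      (if m is m1.+1 then
         ((n%:R - m%:R + 2) / (n + m)%:R) * dnat n1 m1
       else 0)
      + dnat n1 m.+1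
  end.

Definition dnum (n m : int) : rat :=
  match n, m with
  | Posz n', Posz m' => dnat n' m'
  | _, _ => 0
  end.

Definition Le (n m : int) : rat :=
  (n - m + 2)%:~R / (n + m)%:~R * enum_ (n - 1) (m - 1)
  + (n - m - 2)%:~R / (n - m)%:~R * enum_ (n - 1) (m + 1)
  + (n - m - 4)%:~R / (n - m - 2)%:~R *
      (2 / (n - m)%:~R * enum_ (n - 2) (m + 2)
       + 2 / (n + m)%:~R * enum_ (n - 3) (m + 1)).

(* U for a generic array f (U_e with f = e, U_d with f = d) *)
Definition Ugen (f : int -> int -> rat) (n m : int) : rat :=
  (n - m + 2)%:~R / (n + m)%:~R * f (n - 1) (m - 1)
  + (n - m - 2)%:~R / (n - m)%:~R * f (n - 1) (m + 1)
  + 2 / (n - m)%:~R * f (n - 2) (m + 2)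
  + 2 / (n + m)%:~R * f (n - 3) (m + 1)
  + 4 / ((n + m) * (n + m - 2))%:~R * f (n - 3) (m - 1).

(* Write E_{k,j} = c_{k,j} / k! ([ecoef k j]), so that e_{k+j,k-j} = E_{k,j}.
   Divided by k!, the recurrence of c becomes
     E_{k,j} = E_{k,j-1} + ((j+1) E_{k-1,j} - (j-1)/(k-1) E_{k-2,j-1}) / k.
   Unfolding it three times writes U_e - e_{n,m} and e_{n,m} - L_e as
   combinations of entries of E with nonnegative coefficients, plus two
   differences that are nonnegative because j c_{k,j} <= c_{k+1,j} and
   j c_{k,j} <= c_{k+1,j+1}; these inequalities and c >= 0 follow by induction
   on the row k.  Three unfoldings of the recurrence of d give
     d_{n,m} - U_d = 2 (n-m-2) / ((n+m)(n+m-2)) d_{n-3,m-1} >= 0.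
   Finally e <= d by strong induction on n through e <= U_e <= U_d <= d, the
   middle step holding termwise by the induction hypothesis. *)

From mathcomp Require Import all_boot all_order all_algebra.
From mathcomp Require Import zify ring lra.
Import Order.TTheory GRing.Theory Num.Theory.
Local Open Scope ring_scope.

Lemma cnum_n0 p : cnum p 0 = 1.
Proof. by case: p. Qed.

Lemma cnum_small p q : (p < q)%N -> cnum p q = 0.
Proof. by case: q => [|q] //; case: p => [|p] //= ->. Qed.

(* For p = 0 we have q = 0, so the junk value p.-1 = 0 is harmless. *)
Lemma cnumS p q : (q <= p)%N ->
  cnum p.+1 q.+1 = cnum p.+1 q + q.+2%:Z * cnum p q.+1 - q%:Z * cnum p.-1 q.
Proof.
move=> le_qp /=; rewrite ltnS ltnNge le_qp /=.
by case: p le_qp => [|p] //; rewrite leqn0 => /eqP ->.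
Qed.

Section RowStep.

Variable p : nat.
Hypothesis row_ge0 : forall q, 0 <= cnum p q.
Hypothesis row_lb_diag : forall q, q%:Z * cnum p.-1 q <= cnum p q.+1.

Lemma cnumS_step q : (q <= p)%N ->
  cnum p.+1 q + q.+1%:Z * cnum p q.+1 <= cnum p.+1 q.+1.
Proof. by move=> le_qp; rewrite cnumS //; have := row_lb_diag q; lia. Qed.

Lemma cnumS_ge0 q : 0 <= cnum p.+1 q.
Proof.
elim: q => [|q IHq]; first by rewrite cnum_n0.
have [le_qp|lt_pq] := leqP q p; last by rewrite cnum_small.
by have := cnumS_step _ le_qp; have := row_ge0 q.+1; lia.
Qed.

Lemma cnumS_lb q : q%:Z * cnum p q <= cnum p.+1 q.
Proof.
case: q => [|q]; first by rewrite mul0r cnum_n0.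
have [le_qp|lt_pq] := leqP q p.
  by have := cnumS_step _ le_qp; have := cnumS_ge0 q; lia.
by rewrite (@cnum_small p q.+1) ?mulr0 ?cnumS_ge0 // ltnW.
Qed.

Lemma cnumS_lb_diag q : q%:Z * cnum p q <= cnum p.+1 q.+1.
Proof.
have [le_qp|lt_pq] := leqP q p; last by rewrite (@cnum_small p q) ?mulr0 ?cnumS_ge0.
by have := cnumS_step _ le_qp; have := cnumS_lb q; have := row_ge0 q.+1; lia.
Qed.

End RowStep.

Lemma cnum_ge0_lb_diag p :
  (forall q, 0 <= cnum p q) /\ (forall q, q%:Z * cnum p.-1 q <= cnum p q.+1).
Proof.
elim: p => [|p [ge0 lb]]; last by split; [exact: cnumS_ge0 | exact: cnumS_lb_diag].
by split; case=> [|q] //=; rewrite mulr0.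
Qed.

Lemma cnum_ge0 p q : 0 <= cnum p q.
Proof. by case: (cnum_ge0_lb_diag p). Qed.

Lemma cnum_lb_diag p q : q%:Z * cnum p q <= cnum p.+1 q.+1.
Proof. by case: (cnum_ge0_lb_diag p.+1). Qed.

Lemma cnum_lb p q : q%:Z * cnum p q <= cnum p.+1 q.
Proof. by case: (cnum_ge0_lb_diag p) => ge0 lb; exact: cnumS_lb. Qed.

Definition ecoef (k j : nat) : rat := (cnum k j)%:~R / k`!%:R.

Lemma natr_fact_neq0 k : (k`!%:R : rat) != 0.
Proof. by rewrite pnatr_eq0 -lt0n fact_gt0. Qed.

Ltac nonzero_side := rewrite ?natr_fact_neq0 /=; repeat (apply/andP; split); lra.

Lemma enum_ecoef k j (n m : int) :
  n = (k + j)%N -> m = k%:Z - j%:Z -> enum_ n m = ecoef k j.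
Proof.
move=> -> ->; have [le_jk|lt_kj] := leqP j k.
  rewrite (subzn le_jk) /= (leq_trans (leq_subr j k) (leq_addr j k)).
  have -> : (k + j + (k - j) = k + k)%N by rewrite -addnA subnKC.
  have -> : (k + j - (k - j) = j + j)%N by rewrite subnBA // -addnA addKn.
  by rewrite !addnn odd_double !doubleK.
have -> : k%:Z - j%:Z = Negz (j - k).-1 by rewrite NegzE; lia.
by rewrite /ecoef cnum_small // mul0r.
Qed.

Lemma enum_small (n m : int) : n < m -> enum_ n m = 0.
Proof. by case: n m => [n|n] [m|m] //=; rewrite ltz_nat ltnNge => /negbTE ->. Qed.

Lemma enum_odd (n m : int) : ((n - m) %% 2)%Z = 1 -> enum_ n m = 0.
Proof.
case: n m => [n|n] [m|m] //= odd_nm.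
by case: ifP => // /andP[le_mn even_nm]; exfalso; lia.
Qed.

Lemma ecoef_ge0 k j : 0 <= ecoef k j.
Proof. by rewrite divr_ge0 ?ler0z ?cnum_ge0. Qed.

Lemma ecoefS0 k : ecoef k.+1 0 = ecoef k 0 / k.+1%:R.
Proof.
rewrite /ecoef !cnum_n0 factS natrM.
by field; have := ler0n rat k; nonzero_side.
Qed.

Lemma ecoef_rec p q : (q <= p)%N -> ecoef p.+1 q.+1 =
  ecoef p.+1 q + (q.+2%:R * ecoef p q.+1 - q%:R / p%:R * ecoef p.-1 q) / p.+1%:R.
Proof.
move=> le_qp; rewrite /ecoef cnumS // !(intrD, intrN, intrM) factS natrM.
case: p le_qp => [|p] le_qp.
  by move: le_qp; rewrite leqn0 => /eqP ->; rewrite !mul0r subr0 fact0 mul1r divr1.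
rewrite [p.+1`!]factS natrM /=.
by field; have := ler0n rat p; nonzero_side.
Qed.

Lemma ecoef_lb p q : q%:R / p.+1%:R * ecoef p q <= ecoef p.+1 q.
Proof.
rewrite /ecoef factS natrM invfM mulrACA -[q%:R]/(q%:Z%:~R) -intrM.
by apply: ler_wpM2r; rewrite ?ler_int ?cnum_lb // mulr_ge0 ?invr_ge0.
Qed.

Lemma ecoef_lb_diag p q : q%:R / p%:R * ecoef p.-1 q <= ecoef p q.+1.
Proof.
case: p => [|p]; first by rewrite invr0 mulr0 mul0r ecoef_ge0.
rewrite /ecoef factS natrM invfM mulrACA -[q%:R]/(q%:Z%:~R) -intrM.
by apply: ler_wpM2r; rewrite ?ler_int ?cnum_lb_diag // mulr_ge0 ?invr_ge0.
Qed.

Ltac nonneg := first [ assumption | exact: ler0n | by rewrite subr_ge0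
                     | apply: addr_ge0; nonneg | apply: divr_ge0; nonneg
                     | apply: mulr_ge0; nonneg | by [] ].

Lemma enum_bounds_off_diag (K J : nat) (n m : int) : (J <= K)%N ->
  n = (K + J + 4)%N -> m = K%:Z - J%:Z -> Le n m <= enum_ n m <= Ugen enum_ n m.
Proof.
move=> le_JK -> ->; rewrite /Le /Ugen.
rewrite [enum_ (Posz _) _](@enum_ecoef K.+2 J.+2); try lia.
rewrite [enum_ (_ - 1) (_ - 1)](@enum_ecoef K.+1 J.+2); try lia.
rewrite [enum_ (_ - 1) (_ + 1)](@enum_ecoef K.+2 J.+1); try lia.
rewrite [enum_ (_ - 2) (_ + 2)](@enum_ecoef K.+2 J); try lia.
rewrite [enum_ (_ - 3) (_ + 1)](@enum_ecoef K.+1 J); try lia.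
rewrite [enum_ (_ - 3) (_ - 1)](@enum_ecoef K J.+1); try lia.
rewrite (@ecoef_rec K.+1 J.+1) // (@ecoef_rec K.+1 J) ?(leqW le_JK) //.
rewrite (@ecoef_rec K J) //=.
have := ecoef_lb K J; have := ecoef_lb_diag K J.
have := ecoef_ge0 K.+1 J.+2; have := ecoef_ge0 K.+2 J; have := ecoef_ge0 K J.
have : 0 <= J%:R / K%:R * ecoef K.-1 J :> rat.
  by apply: mulr_ge0; [exact: divr_ge0 | exact: ecoef_ge0].
rewrite !(intrD, intrB, intrN, intrM) -!pmulrn !natrD.
move: (ecoef K.+1 J.+2) (ecoef K.+2 J) (ecoef K.+1 J) (ecoef K J.+1) (ecoef K J).
move: (J%:R / K%:R * ecoef K.-1 J) => u a c d b f u_ge0 f_ge0 c_ge0 a_ge0 le_ub le_fd.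
have K_ge0 := ler0n rat K; have J_ge0 := ler0n rat J.
apply/andP; split; rewrite -subr_ge0; set X := (_ - _).
  have -> : X = c / ((J%:R + 2) * (J%:R + 1))
      + (d - J%:R / K.+1%:R * f) / ((J%:R + 1) * (K%:R + 2))
      + J%:R * f / ((J%:R + 1) * (J%:R + 2) * (K%:R + 2) * (K%:R + 1))
      + (b - u) / ((K%:R + 2) * (K%:R + 1)).
    by rewrite {}/X; field; nonzero_side.
  by nonneg.
have -> : X = (J%:R * f / (J%:R + 2) + u) / ((K%:R + 2) * (K%:R + 1)).
  by rewrite {}/X; field; nonzero_side.
by nonneg.
Qed.

Lemma enum_bounds_near_diag (M : nat) (n m : int) :
  n = (M + 3)%N -> m = (M + 1)%N -> Le n m <= enum_ n m <= Ugen enum_ n m.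
Proof.
move=> -> ->; rewrite /Le /Ugen.
rewrite [enum_ (Posz _) _](@enum_ecoef M.+2 1); try lia.
rewrite [enum_ (_ - 1) (_ - 1)](@enum_ecoef M.+1 1); try lia.
rewrite [enum_ (_ - 1) (_ + 1)](@enum_ecoef M.+2 0); try lia.
rewrite [enum_ (_ - 2) (_ + 2)]enum_small; last lia.
rewrite [enum_ (_ - 3) (_ + 1)]enum_small; last lia.
rewrite [enum_ (_ - 3) (_ - 1)](@enum_ecoef M 0); try lia.
rewrite (@ecoef_rec M.+1 0) // !ecoefS0 !mulr0 !addr0.
have := ecoef_ge0 M 0.
rewrite !(intrD, intrB, intrN, intrM) -!pmulrn !natrD.
move: (ecoef M.+1 1) (ecoef M 0) => a g g_ge0.
have M_ge0 := ler0n rat M.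
apply/andP; split; rewrite -subr_ge0; set X := (_ - _).
  have -> : X = g / ((M%:R + 1) * (M%:R + 2)) by rewrite {}/X; field; nonzero_side.
  by nonneg.
by have -> : X = 0 by rewrite {}/X; field; nonzero_side.
Qed.

Lemma enum_bounds (n m : nat) : (3 <= n)%N -> (m < n)%N ->
  Le n m <= enum_ n m <= Ugen enum_ n m.
Proof.
move=> n_ge3 lt_mn; have [odd_nm|even_nm] := boolP (odd (n - m)).
  by rewrite /Le /Ugen !enum_odd ?mulr0 ?addr0 ?lexx //; lia.
have [j def_n] : exists j, n = (m + j + j)%N.
  exists (n - m)./2; have := odd_double_half (n - m).
  by rewrite (negbTE even_nm) add0n -addnn; lia.
case: j def_n => [|[|J]] def_n; first lia.
  by apply: (@enum_bounds_near_diag m.-1); lia.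
by apply: (@enum_bounds_off_diag (m + J) J); lia.
Qed.

Lemma dnat_small n m : (n < m)%N -> dnat n m = 0.
Proof.
elim: n m => [|n IHn] [|m] //= lt_nm.
by rewrite !IHn ?mulr0 ?addr0 //; lia.
Qed.

Lemma dnat_ge0 n m : 0 <= dnat n m.
Proof.
elim: n m => [|n IHn] [|m] /=.
- by [].
- by case: m.
- by rewrite add0r IHn.
apply: addr_ge0 (IHn _).
have [le_mn|lt_nm] := leqP m n; last by rewrite dnat_small ?mulr0.
apply: mulr_ge0 (IHn _); apply: divr_ge0 => //.
have : (m.+1%:R <= n.+1%:R :> rat) by rewrite ler_nat.
lra.
Qed.

Lemma dnat_diag n : dnat n n = (n`!%:R)^-1.
Proof.
elim: n => [|n IHn] /=; first by rewrite invr1.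
rewrite [dnat n n.+2]dnat_small // addr0 IHn subrr add0r factS !natrM natrD.
by field; have := ler0n rat n; nonzero_side.
Qed.

Lemma dnum_small (n m : int) : n < m -> dnum n m = 0.
Proof. by case: n m => [n|n] [m|m] //=; rewrite ltz_nat => /dnat_small. Qed.

Lemma dnum_ge0 (n m : int) : 0 <= dnum n m.
Proof. by case: n m => [n|n] [m|m] //=; exact: dnat_ge0. Qed.

Lemma dnum_rec (n m : int) : 0 < n -> 0 <= m ->
  dnum n m = (n - m + 2)%:~R / (n + m)%:~R * dnum (n - 1) (m - 1) + dnum (n - 1) (m + 1).
Proof.
case: n m => [[|n]|n] [m|m] // _ _.
have -> : n.+1%:Z - 1 = n by lia.
have -> : m%:Z + 1 = m.+1 by lia.
case: m => [|m]; first by rewrite mulr0.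
have -> : m.+1%:Z - 1 = m by lia.
by rewrite /= -PoszD intrD intrB -!pmulrn.
Qed.

Lemma dnum_sub_Ugen (n m : int) : 3 <= n -> 0 <= m -> m < n ->
  dnum n m - Ugen dnum n m =
  (2 * (n - m - 2))%:~R / ((n + m) * (n + m - 2))%:~R * dnum (n - 3) (m - 1).
Proof.
move=> n_ge3 m_ge0 lt_mn; rewrite /Ugen (dnum_rec n m) //; try lia.
rewrite (dnum_rec (n - 1) (m + 1)); try lia.
have -> : n - 1 - 1 = n - 2 by lia.
have -> : m + 1 - 1 = m by lia.
have -> : m + 1 + 1 = m + 2 by lia.
rewrite (dnum_rec (n - 2) m); try lia.
have -> : n - 2 - 1 = n - 3 by lia.
rewrite !(intrD, intrB, intrN, intrM).
have : 3 <= n%:~R :> rat by rewrite (ler_int rat 3).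
have : 0 <= m%:~R :> rat by rewrite ler0z.
have : m%:~R < n%:~R :> rat by rewrite ltr_int.
move: (n%:~R : rat) (m%:~R : rat) => x y lt_yx y_ge0 x_ge3.
by clear n_ge3 m_ge0 lt_mn; field; nonzero_side.
Qed.

Lemma Ugen_dnum_le (n m : int) : 3 <= n -> 0 <= m -> m < n ->
  Ugen dnum n m <= dnum n m.
Proof.
move=> n_ge3 m_ge0 lt_mn; rewrite -subr_ge0 dnum_sub_Ugen //.
have [lt_m1n|eq_m1n] := boolP (m + 1 < n).
  by rewrite mulr_ge0 ?dnum_ge0 ?divr_ge0 ?ler0z //; nia.
by rewrite dnum_small ?mulr0 //; lia.
Qed.

(* The coefficient of [f (n - 1) (m + 1)] is negative for m = n - 1, which is
   why f and g must agree above the diagonal. *)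
Lemma ler_Ugen (f g : int -> int -> rat) (n m : int) : 3 <= n -> 0 <= m -> m < n ->
    (forall i j, i < n -> f i j <= g i j) -> (forall i j, i < j -> f i j = g i j) ->
  Ugen f n m <= Ugen g n m.
Proof.
move=> n_ge3 m_ge0 lt_mn le_fg eq_fg.
have le_cfg c i j : 0 <= c -> i < n -> c * f i j <= c * g i j.
  by move=> c_ge0 lt_in; rewrite ler_wpM2l ?le_fg.
have ratio_ge0 (a b : int) : 0 <= a -> 0 <= b -> 0 <= a%:~R / b%:~R :> rat.
  by move=> a_ge0 b_ge0; rewrite divr_ge0 ?ler0z.
rewrite /Ugen; repeat apply: lerD.
- by apply: (le_cfg); [apply: (ratio_ge0)|]; lia.
- have [lt_m1n|ge_m1n] := ltP (m + 1) n.
    by apply: (le_cfg); [apply: (ratio_ge0)|]; lia.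
  by rewrite eq_fg //; lia.
- by apply: (le_cfg); [apply: (ratio_ge0 2)|]; lia.
- by apply: (le_cfg); [apply: (ratio_ge0 2)|]; lia.
- by apply: (le_cfg); [apply: (ratio_ge0 4)|]; nia.
Qed.

Lemma ler_Ugen_enum_dnum (n m : nat) : (3 <= n)%N -> (m < n)%N ->
    (forall i : nat, (i < n)%N -> forall j, enum_ i j <= dnum i j) ->
  Ugen enum_ n m <= Ugen dnum n m.
Proof.
move=> n_ge3 lt_mn le_ed; apply: ler_Ugen; try lia.
  by case=> [i|i] j //; rewrite ltz_nat => /le_ed.
by move=> i j lt_ij; rewrite enum_small ?dnum_small.
Qed.

Lemma enum_le_dnum (n : nat) (m : int) : enum_ n m <= dnum n m.
Proof.
elim/ltn_ind: n m => n IHn [m|//].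
have [lt_nm|lt_mn|<-] := ltngtP n m.
- by rewrite enum_small ?dnum_ge0 ?ltz_nat.
- have [odd_nm|even_nm] := boolP (odd (n - m)).
    by rewrite enum_odd ?dnum_ge0 //; lia.
  have [n_ge3|n_le2] := leqP 3 n.
    have /andP[_ e_Ue] := enum_bounds n m n_ge3 lt_mn.
    apply: le_trans e_Ue (le_trans (ler_Ugen_enum_dnum n m n_ge3 lt_mn IHn) _).
    by apply: Ugen_dnum_le; lia.
  have [-> ->] : n = 2%N /\ m = 0%N by lia.
  by rewrite (@enum_ecoef 1 1).
- by rewrite (@enum_ecoef n 0) ?addn0 ?subr0 // /ecoef cnum_n0 div1r /= dnat_diag.
Qed.

Theorem lemma5p1 (n m : nat) :
  (3 <= n)%N -> (m < n)%N ->
  [/\ Le n m <= enum_ n m,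
      enum_ n m <= Ugen enum_ n m,
      Ugen enum_ n m <= Ugen dnum n m
    & Ugen dnum n m <= dnum n m].
Proof.
move=> n_ge3 lt_mn; have /andP[Le_e e_Ue] := enum_bounds n m n_ge3 lt_mn.
split=> //; first by apply: ler_Ugen_enum_dnum => // i _ j; exact: enum_le_dnum.
by apply: Ugen_dnum_le; lia.
Qed.
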